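(* Let $(\mathcal R,\le,r)$ be a closed triple satisfying A.1–A.4 with $(\mathcal R,\le)$ a partial order with top element $\mathbb A$. Let $\mathcal C\subseteq\mathcal R$ be a filter on $(\mathcal R,\le)$ with basic Tukey reductions and $\mathcal V$ a nonprincipal ultrafilter on $\omega$ with $\mathcal V\le_T\mathcal C$. Then there are a front $\mathcal F$ on $\mathcal C$ and a function $f:\mathcal F\to\omega$ such that for every $Y\in\mathcal V$ there is $X\in\mathcal C$ with $f[\mathcal F|X]\subseteq Y$. Moreover, if $\mathcal C\restriction\mathcal F$ is a base for an ultrafilter on $\mathcal F$, then $\mathcal V=f(\langle\mathcal C\restriction\mathcal F\rangle)$.
   Context: Axioms A.1–A.4, $\le_{\rm fin}$, $\sqsubseteq$, depth, filters and ''basic Tukey reductions'' are as defined in the context of the p-point Tukey theorem: $r_n(A)$ are approximations, $\mathcal{AR}=\bigcup_n\{r_n(A)\}$; A.1: $r_0(A)=\emptyset$, distinct $A,B$ differ at some $r_n$, $r_n(A)=r_m(B)\Rightarrow n=m$ and equal earlier approximations; A.2: quasi-order $\le_{\rm fin}$ on $\mathcal{AR}$ with finite down-sets, $A\le B\iff\forall n\exists m\ r_n(A)\le_{\rm fin}r_m(B)$, and $a\sqsubset b\le_{\rm fin}c\Rightarrow\exists d\sqsubset c\ a\le_{\rm fin}d$; A.3 and A.4 as usual (nonemptiness/refinement of $[a,A]$ and one-step pigeonhole on $r_{|a|+1}[a,A]$). $\mathcal C$ has basic Tukey reductions if every monotone cofinal $f:\mathcal C\to\mathcal V$ ($\mathcal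 V$ nonprincipal ultrafilter on $\omega$) agrees on $\{Y\in\mathcal C:Y\le X\}$, for some $X\in\mathcal C$, with a monotone continuous $\tilde f:\mathcal R\to\mathcal P(\omega)$ given by $\tilde f(Y)=\bigcup_k\hat f(r_k(Y))$ for some $\hat f:\mathcal{AR}\to[\omega]^{<\omega}$ that is end-extension preserving along $\sqsubseteq$, monotone for $\le_{\rm fin}$, and satisfies $\hat f(s)\subseteq k$ whenever $\mathrm{depth}_{\mathbb A}(s)\le k$. Tukey: $\mathcal V\le_T\mathcal C$ means there is $g:\mathcal C\to\mathcal V$ mapping every cofinal subset of $(\mathcal C,\ge)$ onto a cofinal subset of $(\mathcal V,\supseteq)$. A front on $\mathcal C$ is $\mathcal F\subseteq\mathcal{AR}$ such that every $C\in\mathcal C$ has some $s\in\mathcal F$ with $s\sqsubseteq C$ (i.e. $s=r_n(C)$ for some $n$) and no member of $\mathcal F$ is a proper initial segment of another. $\mathcal F|X=\{a\in\mathcal F:a\le_{\rm fin}X\}$, $\mathcal C\restriction\mathcal F=\{\mathcal F|X:X\in\mathcal C\}$, $\langle\mathcal C\restriction\mathcal F\rangle$ the filter it generates, and $f(\mathcal U)=\{Z\subseteq\omega:f^{-1}[Z]\in\mathcal U\}$. *)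

From Stdlib Require Import List Arith.
Set Implicit Arguments.

Section RamseySpace.
Variables (R AR : Type) (le : R -> R -> Prop) (r : nat -> R -> AR)
          (lefin : AR -> AR -> Prop) (top : R).

Definition sqsubeq (a b : AR) : Prop :=
  exists A n m, n <= m /\ a = r n A /\ b = r m A.
Definition sqsub (a b : AR) : Prop :=
  exists A n m, n < m /\ a = r n A /\ b = r m A.

Definition lefinR (a : AR) (X : R) : Prop := exists n, lefin a (r n X).

Definition depth (B : R) (a : AR) (n : nat) : Prop :=
  lefin a (r n B) /\ forall m, m < n -> ~ lefin a (r m B).

Definition in_interval (a : AR) (B X : R) : Prop :=
  le X B /\ exists n, r n X = a.

Definition next_approx (a : AR) (A : R) (b : AR) : Prop :=
  exists X n, le X A /\ r n X = a /\ b = r (S n) X.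

Definition closed_triple : Prop :=
  forall s : nat -> AR,
    (forall n, exists A, forall k, k <= n -> r k A = s k) ->
    exists A, forall k, r k A = s k.

Definition axiom_A1 : Prop :=
  (forall A B, r 0 A = r 0 B) /\
  (forall A B, A <> B -> exists n, r n A <> r n B) /\
  (forall A B n m, r n A = r m B -> n = m /\ forall i, i < n -> r i A = r i B).

Definition axiom_A2 : Prop :=
  (forall a, lefin a a) /\
  (forall a b c, lefin a b -> lefin b c -> lefin a c) /\
  (forall a, exists l : list AR, forall b, lefin b a -> In b l) /\
  (forall A B, le A B <-> forall n, exists m, lefin (r n A) (r m B)) /\
  (forall a b c, sqsub a b -> lefin b c -> exists d, sqsub d c /\ lefin a d).

Definition axiom_A3 : Prop :=
  (forall a B n, depth B a n ->
     forall A, in_interval (r n B) B A -> exists X, in_interval a A X) /\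
  (forall a A B, le A B -> (exists X, in_interval a A X) ->
     exists n A', depth B a n /\ in_interval (r n B) B A' /\
       (exists X, in_interval a A' X) /\
       (forall X, in_interval a A' X -> in_interval a A X)).

Definition axiom_A4 : Prop :=
  forall a B n, depth B a n -> forall O : AR -> Prop,
    exists A, in_interval (r n B) B A /\
      ((forall b, next_approx a A b -> O b) \/
       (forall b, next_approx a A b -> ~ O b)).

Definition partial_order_top : Prop :=
  (forall A, le A A) /\
  (forall A B C, le A B -> le B C -> le A C) /\
  (forall A B, le A B -> le B A -> A = B) /\
  (forall A, le A top).

Definition ramsey_setting : Prop :=
  closed_triple /\ axiom_A1 /\ axiom_A2 /\ axiom_A3 /\ axiom_A4 /\
  partial_order_top.

Definition is_filter (Cf : R -> Prop) : Prop :=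
  (exists X, Cf X) /\
  (forall X Y, Cf X -> le X Y -> Cf Y) /\
  (forall X Y, Cf X -> Cf Y -> exists Z, Cf Z /\ le Z X /\ le Z Y).

End RamseySpace.

(* Ultrafilters on a "universe" U ⊆ T, with subsets represented as predicates *)
Definition is_ultrafilter_on {T : Type} (U : T -> Prop)
    (F : (T -> Prop) -> Prop) : Prop :=
  (forall Z, F Z -> forall x, Z x -> U x) /\
  F U /\
  ~ F (fun _ => False) /\
  (forall Z W, F Z -> (forall x, Z x -> W x) -> (forall x, W x -> U x) -> F W) /\
  (forall Z W, F Z -> F W -> F (fun x => Z x /\ W x)) /\
  (forall Z, (forall x, Z x -> U x) ->
     F Z \/ F (fun x => U x /\ ~ Z x)).

Definition nonprincipal_ultrafilter (V : (nat -> Prop) -> Prop) : Prop :=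
  is_ultrafilter_on (fun _ => True) V /\ forall n, ~ V (fun m => m = n).

Definition tukey_le {R : Type} (le : R -> R -> Prop) (Cf : R -> Prop)
    (V : (nat -> Prop) -> Prop) : Prop :=
  exists g : R -> (nat -> Prop),
    (forall X, Cf X -> V (g X)) /\
    forall Xs : R -> Prop,
      (forall X, Xs X -> Cf X) ->
      (forall Y, Cf Y -> exists X, Xs X /\ le X Y) ->
      forall W, V W -> exists X, Xs X /\ forall n, g X n -> W n.

Definition end_ext (u v : list nat) : Prop :=
  (forall x, In x u -> In x v) /\
  (forall x y, In x v -> ~ In x u -> In y u -> y < x).

Definition basic_tukey_reductions {R AR : Type} (le : R -> R -> Prop)
    (r : nat -> R -> AR) (lefin : AR -> AR -> Prop) (top : R)
    (Cf : R -> Prop) : Prop :=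
  forall (V : (nat -> Prop) -> Prop), nonprincipal_ultrafilter V ->
  forall f : R -> (nat -> Prop),
    (forall X, Cf X -> V (f X)) ->
    (forall X Y, Cf X -> Cf Y -> le X Y -> forall n, f X n -> f Y n) ->
    (forall W, V W -> exists X, Cf X /\ forall n, f X n -> W n) ->
    exists (X : R) (fhat : AR -> list nat),
      Cf X /\
      (forall s t, sqsubeq r s t -> end_ext (fhat s) (fhat t)) /\
      (forall s t, lefin s t -> forall n, In n (fhat s) -> In n (fhat t)) /\
      (forall s k, (exists n, n <= k /\ lefin s (r n top)) ->
         forall x, In x (fhat s) -> x < k) /\
      (forall Y Z, le Y Z -> forall n,
         (exists k, In n (fhat (r k Y))) -> exists k, In n (fhat (r k Z))) /\
      (forall Y, Cf Y -> le Y X ->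
         forall n, f Y n <-> exists k, In n (fhat (r k Y))).

Definition is_front {R AR : Type} (r : nat -> R -> AR) (Cf : R -> Prop)
    (F : AR -> Prop) : Prop :=
  (forall X, Cf X -> exists n, F (r n X)) /\
  (forall s t, F s -> F t -> ~ sqsub r s t).

Definition front_restr {R AR : Type} (r : nat -> R -> AR)
    (lefin : AR -> AR -> Prop) (F : AR -> Prop) (X : R) : AR -> Prop :=
  fun a => F a /\ lefinR r lefin a X.

Definition gen_filter {R AR : Type} (r : nat -> R -> AR)
    (lefin : AR -> AR -> Prop) (Cf : R -> Prop) (F : AR -> Prop)
    (Z : AR -> Prop) : Prop :=
  (forall a, Z a -> F a) /\
  exists Xs : list R, (forall X, In X Xs -> Cf X) /\
    forall a, F a -> (forall X, In X Xs -> front_restr r lefin F X a) -> Z a.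

From Stdlib Require Import List Arith Lia Classical.

(* A Tukey map g : C -> V is first replaced by its "downward hull"
   X |-> U{ g Y : Y in C, Y <= X }, which is monotone, still lands in V and is
   still cofinal.  Basic Tukey reductions then give X0 in C and a finitary
   approximation fhat : AR -> [omega]^<omega with f Y = U_k fhat (r_k Y) below X0.
   Since the values of the hull are nonempty, every X in C has an approximation
   r_k X with fhat (r_k X) <> nil; the approximations that are the FIRST ones
   with nonempty fhat form a front F on C (this only uses axiom A.1), and the
   map f a := some element of fhat a sends F|X into every prescribed member of
   V for small enough X.  Finally a general fact about pushforwards: a map that
   carries some member of an ultrafilter G into every member of an
   ultrafilter V pushes G forward exactly onto V. *)

(* The downward hull of a Tukey map is a monotone cofinal map into V; this is
   the form of map required by the definition of basic Tukey reductions. *)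
Section TukeyHull.
Context {R : Type} {le : R -> R -> Prop} {Cf : R -> Prop}
        {V : (nat -> Prop) -> Prop}.
Hypothesis le_refl : forall X, le X X.
Hypothesis le_trans : forall X Y Z, le X Y -> le Y Z -> le X Z.
Hypothesis V_up : forall Z W, V Z -> (forall n, Z n -> W n) -> V W.

Definition tukey_hull (g : R -> nat -> Prop) (X : R) (n : nat) : Prop :=
  exists Y, Cf Y /\ le Y X /\ g Y n.

Lemma tukey_hull_monotone_cofinal :
  tukey_le le Cf V ->
  exists f : R -> nat -> Prop,
    (forall X, Cf X -> V (f X)) /\
    (forall X Y, Cf X -> Cf Y -> le X Y -> forall n, f X n -> f Y n) /\
    (forall W, V W -> exists X, Cf X /\ forall n, f X n -> W n).
Proof.
  intros [g [g_in_V g_cofinal]].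
  exists (tukey_hull g); split; [|split].
  - intros X HX. apply V_up with (Z := g X); [now apply g_in_V|].
    intros n Hn. exists X; auto.
  - intros X Y _ _ HXY n [Z [HZ [HZX Hn]]]. exists Z; eauto.
  - intros W HW. apply NNPP; intro no_small.
    (* the points whose g-value escapes W are cofinal, contradicting Tukey *)
    set (Bad := fun Y => Cf Y /\ ~ (forall n, g Y n -> W n)).
    assert (Bad_cofinal : forall Y, Cf Y -> exists X, Bad X /\ le X Y).
    { intros Y HY. apply NNPP; intro no_bad. apply no_small.
      exists Y; split; [exact HY|].
      intros n [Z [HZ [HZY HgZ]]]. apply NNPP; intro HWn.
      apply no_bad. exists Z; split; [split; [exact HZ|]|exact HZY].
      intro HgW; exact (HWn (HgW n HgZ)). }
    destruct (g_cofinal Bad (fun X HX => proj1 HX) Bad_cofinal W HW)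
      as [X [[_ HX] HXW]].
    exact (HX HXW).
Qed.
End TukeyHull.

Lemma least_index (P : nat -> Prop) :
  (exists k, P k) -> exists k, P k /\ forall j, j < k -> ~ P j.
Proof.
  intro HP.
  destruct (dec_inh_nat_subset_has_unique_least_element P (fun n => classic (P n)) HP)
    as [k [[Hk Hleast] _]].
  exists k; split; [exact Hk|].
  intros j Hj HPj. specialize (Hleast j HPj). lia.
Qed.

Section FirstApproximations.
Context {R AR : Type} (r : nat -> R -> AR).
Hypothesis r_index :
  forall A B n m, r n A = r m B -> n = m /\ forall i, i < n -> r i A = r i B.

Definition first_marked (marked : AR -> Prop) (s : AR) : Prop :=
  marked s /\ forall t, sqsub r t s -> ~ marked t.

Lemma first_marked_front (Cf : R -> Prop) (marked : AR -> Prop) :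
  (forall X, Cf X -> exists k, marked (r k X)) ->
  is_front r Cf (first_marked marked).
Proof.
  intros marks. split.
  - intros X HX. destruct (least_index _ (marks X HX)) as [k [Hk Hmin]].
    exists k. split; [exact Hk|].
    intros t [A [n [m [Hnm [-> Hs]]]]] Ht.
    destruct (r_index A X m k (eq_sym Hs)) as [-> same_prefix].
    apply (Hmin n Hnm). rewrite <- same_prefix; assumption.
  - intros s t [Hs _] [_ Ht] Hst. exact (Ht s Hst Hs).
Qed.
End FirstApproximations.

Section ReductionFront.
Context {R AR : Type} {le : R -> R -> Prop} {r : nat -> R -> AR}
        {lefin : AR -> AR -> Prop} {Cf : R -> Prop}
        {V : (nat -> Prop) -> Prop} {fm : R -> nat -> Prop} {X0 : R}
        (fhat : AR -> list nat).
Hypothesis C_meet :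
  forall X Y, Cf X -> Cf Y -> exists Z, Cf Z /\ le Z X /\ le Z Y.
Hypothesis V_proper : ~ V (fun _ => False).
Hypothesis V_up : forall Z W, V Z -> (forall n, Z n -> W n) -> V W.
Hypothesis fm_in_V : forall X, Cf X -> V (fm X).
Hypothesis fm_monotone :
  forall X Y, Cf X -> Cf Y -> le X Y -> forall n, fm X n -> fm Y n.
Hypothesis fm_cofinal : forall W, V W -> exists X, Cf X /\ forall n, fm X n -> W n.
Hypothesis X0_in_C : Cf X0.
Hypothesis fhat_monotone :
  forall s t, lefin s t -> forall n, In n (fhat s) -> In n (fhat t).
Hypothesis tilde_monotone : forall Y Z, le Y Z -> forall n,
  (exists k, In n (fhat (r k Y))) -> exists k, In n (fhat (r k Z)).
Hypothesis fhat_represents : forall Y, Cf Y -> le Y X0 ->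
  forall n, fm Y n <-> exists k, In n (fhat (r k Y)).

Definition fhat_nonempty (s : AR) : Prop := exists n, In n (fhat s).

Definition fhat_choice (s : AR) : nat := hd 0 (fhat s).

Lemma fhat_choice_in s : fhat_nonempty s -> In (fhat_choice s) (fhat s).
Proof. unfold fhat_nonempty, fhat_choice. destruct (fhat s) as [|n l]; simpl; [intros [x []]|auto]. Qed.

(* Every member of C has an approximation with nonempty fhat, because the
   values of fm are members of the proper filter V. *)
Lemma reduction_marks_every_point :
  forall X, Cf X -> exists k, fhat_nonempty (r k X).
Proof.
  intros X HX. destruct (C_meet X X0 HX X0_in_C) as [Z [HZ [HZX HZX0]]].
  assert (fmZ_nonempty : exists n, fm Z n).
  { apply NNPP; intro Hempty. apply V_proper.
    apply (V_up (fm Z)); [now apply fm_in_V|]. intros n Hn; apply Hempty; eauto. }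
  destruct fmZ_nonempty as [n Hn].
  apply (fhat_represents Z HZ HZX0) in Hn.
  destruct (tilde_monotone Z X HZX n Hn) as [k Hk]. exists k, n; exact Hk.
Qed.

Lemma reduction_front_cofinal (F : AR -> Prop) :
  (forall a, F a -> fhat_nonempty a) ->
  forall Y, V Y -> exists X, Cf X /\
    forall a, front_restr r lefin F X a -> Y (fhat_choice a).
Proof.
  intros F_nonempty Y HY. destruct (fm_cofinal Y HY) as [X1 [HX1 HX1Y]].
  destruct (C_meet X1 X0 HX1 X0_in_C) as [Z [HZ [HZX1 HZX0]]].
  exists Z; split; [exact HZ|].
  intros a [Fa [n Hn]].
  apply HX1Y, (fm_monotone Z X1); auto.
  apply (fhat_represents Z HZ HZX0). exists n.
  apply (fhat_monotone a); [exact Hn|]. now apply fhat_choice_in, F_nonempty.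
Qed.
End ReductionFront.

Lemma gen_filter_of_restriction {R AR : Type} (r : nat -> R -> AR)
    (lefin : AR -> AR -> Prop) {Cf : R -> Prop} {F Z : AR -> Prop} {X : R} :
  Cf X -> (forall a, front_restr r lefin F X a -> Z a) ->
  gen_filter r lefin Cf F (fun a => F a /\ Z a).
Proof.
  intros HX HXZ. split; [tauto|]. exists (X :: nil). split.
  - intros X' [<-|[]]; exact HX.
  - intros a Fa HaX. split; [exact Fa|]. apply HXZ, HaX. left; reflexivity.
Qed.

Lemma pushforward_ultrafilter {T : Type} {U : T -> Prop}
    {G : (T -> Prop) -> Prop} {V : (nat -> Prop) -> Prop} {f : T -> nat} :
  is_ultrafilter_on U G -> is_ultrafilter_on (fun _ => True) V ->
  (forall Y, V Y -> G (fun a => U a /\ Y (f a))) ->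
  forall Z, V Z <-> G (fun a => U a /\ Z (f a)).
Proof.
  intros [_ [_ [G_proper [G_up [G_meet _]]]]] [_ [_ [_ [_ [_ V_ultra]]]]]
    V_below Z.
  split; [apply V_below|]. intros GZ.
  destruct (V_ultra Z (fun _ _ => I)) as [VZ|VnotZ]; [exact VZ|].
  exfalso. apply G_proper.
  apply (G_up _ _ (G_meet _ _ GZ (V_below _ VnotZ))).
  - intros a [[_ HZ] [_ [_ HnZ]]]. exact (HnZ HZ).
  - intros a [].
Qed.

Theorem mainTheorem8 (R AR : Type) (le : R -> R -> Prop) (r : nat -> R -> AR)
    (lefin : AR -> AR -> Prop) (top : R)
    (Hsetting : ramsey_setting le r lefin top)
    (Cf : R -> Prop) (HC : is_filter le Cf)
    (HBT : basic_tukey_reductions le r lefin top Cf)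
    (V : (nat -> Prop) -> Prop) (HV : nonprincipal_ultrafilter V)
    (HT : tukey_le le Cf V) :
  exists (F : AR -> Prop) (f : AR -> nat),
    is_front r Cf F /\
    (forall Y, V Y -> exists X, Cf X /\
       forall a, front_restr r lefin F X a -> Y (f a)) /\
    (is_ultrafilter_on F (gen_filter r lefin Cf F) ->
       forall Z : nat -> Prop,
         V Z <-> gen_filter r lefin Cf F (fun a => F a /\ Z (f a))).
Proof.
  destruct Hsetting as [_ [[_ [_ r_index]] [_ [_ [_ [le_refl [le_trans _]]]]]]].
  destruct HC as [_ [_ C_meet]].
  pose proof HV as [V_ultra _].
  pose proof V_ultra as [_ [_ [V_proper [V_up _]]]].
  assert (V_upward : forall Z W, V Z -> (forall n, Z n -> W n) -> V W)
    by (intros Z W HZ HZW; exact (V_up Z W HZ HZW (fun _ _ => I))).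
  destruct (tukey_hull_monotone_cofinal le_refl le_trans V_upward HT)
    as [fm [fm_in_V [fm_monotone fm_cofinal]]].
  destruct (HBT V HV fm fm_in_V fm_monotone fm_cofinal)
    as [X0 [fhat [X0_in_C [_ [fhat_monotone [_ [tilde_monotone fhat_represents]]]]]]].
  set (F := first_marked r (fhat_nonempty fhat)).
  assert (cofinal : forall Y, V Y -> exists X, Cf X /\
            forall a, front_restr r lefin F X a -> Y (fhat_choice fhat a))
    by (apply (reduction_front_cofinal fhat C_meet fm_monotone fm_cofinal X0_in_C
                 fhat_monotone fhat_represents); intros a [Ha _]; exact Ha).
  exists F, (fhat_choice fhat). split; [|split; [exact cofinal|]].
  - apply first_marked_front; [exact r_index|].
    exact (reduction_marks_every_point fhat C_meet V_proper V_upward fm_in_V X0_in_C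
             tilde_monotone fhat_represents).
  - intros G_ultra. apply (pushforward_ultrafilter G_ultra V_ultra).
    intros Y HY. destruct (cofinal Y HY) as [X [HX HXY]].
    exact (gen_filter_of_restriction r lefin HX HXY).
Qed.
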